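(* Let $\mu>\operatorname{cf}(\mu)=\kappa$ be a singular cardinal and let $\lambda$ be a regular cardinal with $\mu<\lambda\le 2^\mu$. Let $\mathcal{S}$ be a nice system for $\mu$, consisting of $(\mu_i:i<\kappa)$, $(\lambda_i:i<\kappa)$, $(\mathscr{D}_i:i<\kappa)$, $(W_i:i<\kappa)$, $(g_i:i<\kappa)$. Assume: (1) $\mathscr{D}$ is a uniform ultrafilter over $\kappa$ which is generated by at most $\lambda$ many sets; (2) $\bar f=(f_\alpha:\alpha<\lambda)$ is a sullam in $(\prod_{i<\kappa}W_i,\mathscr{D})$; (3) $\operatorname{cf}(\prod_{i<\kappa}\mathscr{D}_i,\supseteq)=\lambda$. Then there exists a uniform ultrafilter $\mathscr{U}$ over $\mu$ with $\operatorname{Ch}(\mathscr{U})\le\lambda$.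
   Context: A filter over a cardinal $\theta$ is uniform if all its members have cardinality $\theta$; all filters $\mathscr{D}$ over a regular $\theta$ considered here are uniform and contain $\{\theta-u:u\in[\theta]^{<\theta}\}$. For $A,B\subseteq\theta$, $A\subseteq^* B$ means $|A-B|<\theta$. A base for a uniform filter $\mathcal{F}$ over $\theta$ is a subfamily $\mathcal{A}\subseteq\mathcal{F}$ such that every $B\in\mathcal{F}$ has some $A\in\mathcal{A}$ with $A\subseteq^*B$; $\operatorname{Ch}(\mathcal{F})$ is the minimal size of a base. For a filter $\mathscr{D}$ over $\theta$: $I(\mathscr{D})=\{A\subseteq\theta:\theta-A\in\mathscr{D}\}$, $\mathscr{D}^+=\mathcal{P}(\theta)-I(\mathscr{D})$, and $A\subseteq_{\mathscr{D}}B$ iff $A-B\in I(\mathscr{D})$. A quasi order $(W,\le_W)$ is a reflexive transitive relation; $V\subseteq W$ is dense if for every $x\in W$ there is $y\in V$ with $x\le_W y$. For a quasi order $W$ and a filter $\mathscr{D}$ over $\theta$, a function $g:W\to\mathscr{D}^+$ is $\subseteq_{\mathscr{D}}$-decreasing if $s\le_W t$ implies $g(t)\subseteq_{\mathscr{D}}g(s)$, and $g$ has the decidability property if for every $s\in W$ and every $A\subseteq\theta$ there is $t\in W$ with $s\le_W t$ and ($g(t)\subseteq_{\mathscr{D}}A$ or $g(t)\subseteq_{\mathscr{D}}\theta-A$). Nice system for singular $\mu$ with $\operatorname{cf}(\mu)=\kappa$: an increasing sequence of cardinals $(\mu_i:i<\kappa)$ with $\mu=\bigcup_i\mu_i$;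 an increasing sequence of regular cardinals $(\lambda_i:i<\kappa)$ with $\mu_i\le\lambda_i<\mu_{i+1}$; filters $\mathscr{D}_i$ over $\lambda_i$; quasi orders $W_i$; and functions $g_i:W_i\to\mathscr{D}_i^+$ each $\subseteq_{\mathscr{D}_i}$-decreasing with the decidability property. Sullam: for a regular $\kappa$, an ultrafilter (or filter) $\mathscr{D}$ over $\kappa$ containing all co-bounded sets, and quasi orders $W_i$, a sequence $(f_\alpha:\alpha<\lambda)$ with $f_\alpha\in\prod_{i<\kappa}W_i$ is a sullam in $(\prod_{i<\kappa}W_i,\mathscr{D})$ if (a) for $\alpha<\beta$, $\{i:f_\alpha(i)\le_{W_i}f_\beta(i)\}\in\mathscr{D}$, and (b) whenever $V_i\subseteq W_i$ is dense for each $i$, there is $\alpha<\lambda$ with $\{i:f_\alpha(i)\in V_i\}\in\mathscr{D}$. $\operatorname{cf}(\prod_{i<\kappa}\mathscr{D}_i,\supseteq)$ is the minimal size of a family $\mathcal{F}\subseteq\prod_{i<\kappa}\mathscr{D}_i$ such that for every $\langle B_i:i<\kappa\rangle\in\prod_i\mathscr{D}_i$ there is $\langle A_i:i<\kappa\rangle\in\mathcal{F}$ with $\{i:A_i\subseteq B_i\}\in\mathscr{D}$. *)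

(* Cardinals are represented as well-ordered types whose
   proper initial segments all have strictly smaller cardinality
   (i.e. initial ordinals); cardinality comparison is via injections. *)
From Stdlib Require Import List.



Definition set (T : Type) := T -> Prop.
Definition subset {T} (A B : set T) : Prop := forall x, A x -> B x.
Definition compl {T} (A : set T) : set T := fun x => ~ A x.
Definition setD {T} (A B : set T) : set T := fun x => A x /\ ~ B x.
Definition elts {T} (A : set T) : Type := {x : T | A x}.

Definition card_le (A B : Type) : Prop :=
  exists f : A -> B, forall x y, f x = f y -> x = y.
Definition card_lt (A B : Type) : Prop := card_le A B /\ ~ card_le B A.

Definition is_wo {T} (lt : T -> T -> Prop) : Prop :=
  well_founded lt /\
  (forall x y z, lt x y -> lt y z -> lt x z) /\
  (forall x y, lt x y \/ x = y \/ lt y x).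

Definition is_card {T} (lt : T -> T -> Prop) : Prop :=
  is_wo lt /\ forall x : T, card_lt {y : T | lt y x} T.

Definition seg {T} (lt : T -> T -> Prop) (m : T) : Type := {x : T | lt x m}.
Definition seg_lt {T} (lt : T -> T -> Prop) (m : T) : seg lt m -> seg lt m -> Prop :=
  fun a b => lt (proj1_sig a) (proj1_sig b).

Definition cofinal {T I} (lt : T -> T -> Prop) (f : I -> T) : Prop :=
  forall x : T, exists i : I, lt x (f i) \/ x = f i.

Definition cf_is {T} (lt : T -> T -> Prop) (K : Type) : Prop :=
  (exists f : K -> T, cofinal lt f) /\
  (forall (I : Type) (f : I -> T), card_lt I K -> ~ cofinal lt f).

Definition regular {T} (lt : T -> T -> Prop) : Prop :=
  is_card lt /\ card_le nat T /\ cf_is lt T.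

Definition is_filter {T} (F : set (set T)) : Prop :=
  F (fun _ => True) /\
  (forall A B, F A -> subset A B -> F B) /\
  (forall A B, F A -> F B -> F (fun x => A x /\ B x)).

Definition is_ultrafilter {T} (F : set (set T)) : Prop :=
  is_filter F /\ ~ F (fun _ => False) /\ (forall A, F A \/ F (compl A)).

Definition uniform {T} (F : set (set T)) : Prop :=
  forall A, F A -> card_le T (elts A).

Definition contains_cosmall {T} (F : set (set T)) : Prop :=
  forall u : set T, card_lt (elts u) T -> F (compl u).

Definition ideal_of {T} (F : set (set T)) : set (set T) := fun A => F (compl A).
Definition positive {T} (F : set (set T)) : set (set T) := fun A => ~ ideal_of F A.
Definition subD {T} (F : set (set T)) (A B : set T) : Prop := ideal_of F (setD A B).

Definition generated_by {T I} (F : set (set T)) (G : I -> set T) : Prop :=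
  (forall a, F (G a)) /\
  (forall A, F A -> exists l : list I, subset (fun x => forall a, In a l -> G a x) A).

Definition quasi_order {W} (le : W -> W -> Prop) : Prop :=
  (forall x, le x x) /\ (forall x y z, le x y -> le y z -> le x z).
Definition dense {W} (le : W -> W -> Prop) (V : set W) : Prop :=
  forall x, exists y, V y /\ le x y.

Definition good_map {W T} (le : W -> W -> Prop) (D : set (set T)) (g : W -> set T) : Prop :=
  (forall s, positive D (g s)) /\
  (forall s t, le s t -> subD D (g t) (g s)) /\
  (forall s (A : set T), exists t, le s t /\ (subD D (g t) A \/ subD D (g t) (compl A))).

Definition sullam {K L} (W : K -> Type) (leW : forall i, W i -> W i -> Prop)
  (D : set (set K)) (ltL : L -> L -> Prop) (f : L -> forall i, W i) : Prop :=
  (forall a b, ltL a b -> D (fun i => leW i (f a i) (f b i))) /\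
  (forall V : forall i, set (W i), (forall i, dense (leW i) (V i)) ->
     exists a, D (fun i => V i (f a i))).

Definition prod_cofinal {K I : Type} (X : K -> Type) (Ds : forall i, set (set (X i)))
  (D : set (set K)) (F : I -> forall i, set (X i)) : Prop :=
  (forall a i, Ds i (F a i)) /\
  (forall B : forall i, set (X i), (forall i, Ds i (B i)) ->
     exists a, D (fun i => subset (F a i) (B i))).

Definition prod_cf_is {K} (X : K -> Type) (Ds : forall i, set (set (X i)))
  (D : set (set K)) (L : Type) : Prop :=
  (exists F : L -> forall i, set (X i), prod_cofinal X Ds D F) /\
  (forall (I : Type) (F : I -> forall i, set (X i)), card_lt I L -> ~ prod_cofinal X Ds D F).

(* Ch(U) <= |L| : U has a base (mod ⊆^* ) indexed by L *)
Definition Ch_le {T} (U : set (set T)) (L : Type) : Prop :=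
  exists A : L -> set T, (forall a, U (A a)) /\
    (forall B, U B -> exists a, card_lt (elts (setD (A a) B)) T).

Definition is_succ {K} (lt : K -> K -> Prop) (i j : K) : Prop :=
  lt i j /\ forall k, lt i k -> k = j \/ lt j k.

From Stdlib Require Import List FinFun Classical ClassicalEpsilon ProofIrrelevance
  FunctionalExtensionality Lia Wellfounded.

(* Put A ⊆ mu into U iff for some alpha < lambda, for D-almost
   every i, the trace of A on lambda_i contains g_i(f_alpha(i)) modulo D_i.
   - U is a filter because the sullam is D-increasing and each g_i is
     decreasing; it is proper because the g_i take D_i-positive values; it is
     ultra because, by decidability of g_i, the points of W_i deciding a given
     A form a dense set, which the sullam meets D-almost everywhere.
   - U is uniform: a member covers lambda_i-many points for D-many i, and
     since D is uniform these i are unbounded in kappa, hence in mu.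
   - Every member of U contains a set of the form
       base(alpha, beta, l) = U_{i in ∩l} g_i(f_alpha(i)) ∩ F_beta(i),
     with F cofinal in (prod D_i, ⊇) and l a finite list of generators of D;
     there are lambda·lambda·lambda^{<omega} = lambda such sets. *)

Lemma card_le_refl (A : Type) : card_le A A.
Proof. exists (fun x => x); auto. Qed.

Lemma card_le_trans (A B C : Type) : card_le A B -> card_le B C -> card_le A C.
Proof. intros [f Hf] [g Hg]; exists (fun x => g (f x)); auto. Qed.

Lemma card_le_prod (A B C E : Type) :
  card_le A B -> card_le C E -> card_le (A * C) (B * E).
Proof.
  intros [f Hf] [g Hg]; exists (fun p => (f (fst p), g (snd p))).
  intros [a c] [a' c'] H; simpl in H; inversion H; f_equal; auto.
Qed.

Lemma sig_eq {T} (P : T -> Prop) (x y : {t | P t}) : proj1_sig x = proj1_sig y -> x = y.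
Proof. destruct x, y; simpl; intros ->; f_equal; apply proof_irrelevance. Qed.

Lemma card_le_sig {T} (P : T -> Prop) : card_le {t | P t} T.
Proof. exists (@proj1_sig _ P); intros x y; apply sig_eq. Qed.

Definition finite_type (X : Type) : Prop := exists l : list X, forall x, In x l.

Lemma finite_not_infinite (X : Type) : finite_type X -> ~ card_le nat X.
Proof.
  intros [l Hl] [e He].
  assert (H := NoDup_incl_length (l:=map e (seq 0 (S (length l)))) (l':=l)).
  rewrite length_map, length_seq in H.
  assert (S (length l) <= length l); [|lia].
  apply H.
  - apply Injective_map_NoDup; [exact He| apply seq_NoDup].
  - intros x _; apply Hl.
Qed.

(* If no list exhausts [X], picking a fresh element of ever longer lists
   yields an injection of [nat]. *)
Lemma not_infinite_finite (X : Type) : ~ card_le nat X -> finite_type X.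
Proof.
  intros Hn; apply NNPP; intros Hc.
  assert (Hfresh : forall l : list X, exists x, ~ In x l).
  { intros l; apply NNPP; intros H; apply Hc; exists l; intros x.
    apply NNPP; intros H'; apply H; exists x; auto. }
  set (nxt := fun l => proj1_sig (constructive_indefinite_description _ (Hfresh l))).
  assert (Hnxt : forall l, ~ In (nxt l) l).
  { intros l; unfold nxt; destruct constructive_indefinite_description; auto. }
  set (s := fix s n := match n with 0 => nil | S n => nxt (s n) :: s n end).
  assert (Hin : forall m n, m < n -> In (nxt (s m)) (s n)).
  { intros m n; induction n; intros H; [lia|].
    simpl. destruct (PeanoNat.Nat.eq_dec m n); [subst; left; auto| right; apply IHn; lia]. }
  apply Hn; exists (fun n => nxt (s n)); intros m n E.
  destruct (PeanoNat.Nat.lt_total m n) as [H|[H|H]]; auto.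
  - exfalso; apply (Hnxt (s n)); rewrite <- E; apply Hin; auto.
  - exfalso; apply (Hnxt (s m)); rewrite E; apply Hin; auto.
Qed.

Lemma finite_option (X : Type) : finite_type X -> finite_type (option X).
Proof.
  intros [l Hl]; exists (None :: map Some l); intros [x|]; simpl; auto.
  right; apply in_map; auto.
Qed.

Lemma finite_prod (X Y : Type) : finite_type X -> finite_type Y -> finite_type (X * Y).
Proof.
  intros [l Hl] [l' Hl']; exists (list_prod l l'); intros [x y]; apply in_prod; auto.
Qed.

(* An infinite type absorbs one extra point (Hilbert's hotel along a copy
   of [nat]). *)
Lemma option_absorbed (X : Type) : card_le nat X -> card_le (option X) X.
Proof.
  intros [e He].
  set (h := fun o : option X => match o with
    | None => e 0
    | Some x => match excluded_middle_informative (exists n, x = e n) with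
       | left H => e (S (proj1_sig (constructive_indefinite_description _ H)))
       | right _ => x end end).
  exists h; intros [x|] [y|]; unfold h;
  repeat match goal with |- context [excluded_middle_informative ?P] =>
    destruct (excluded_middle_informative P) end;
  repeat match goal with |- context [constructive_indefinite_description ?P ?H] =>
    destruct (constructive_indefinite_description P H) end; simpl; intros E;
  try (subst; reflexivity);
  try (apply He in E; first [discriminate | injection E; intros; subst; congruence]);
  exfalso;
  match goal with
  | n : ~ (exists k, ?z = e k) |- _ => apply n; eexists; eauto; fail
  end.
Qed.

(* Embedding a well-order into a type that is larger than each of its proper
   initial segments: define the embedding by well-founded recursion, sending
   each point to a value not yet used by its predecessors. *)
Lemma card_le_of_segments {P Q : Type} (ltP : P -> P -> Prop) (wf : well_founded ltP)
  (tot : forall p q, ltP p q \/ p = q \/ ltP q p)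
  (Hbig : forall p, ~ card_le Q {q | ltP q p}) : card_le P Q.
Proof.
  assert (fresh : forall p (rec : forall q, ltP q p -> Q),
             exists t, forall q Hq, rec q Hq <> t).
  { intros p rec; apply NNPP; intros Hn.
    assert (Hsurj : forall t, exists qq : {q | ltP q p},
               rec (proj1_sig qq) (proj2_sig qq) = t).
    { intros t; apply NNPP; intros H1; apply Hn; exists t; intros q Hq E; apply H1;
      exists (exist _ q Hq); auto. }
    apply (Hbig p).
    exists (fun t => proj1_sig (constructive_indefinite_description _ (Hsurj t))).
    intros t t' E.
    destruct (constructive_indefinite_description _ (Hsurj t)) as [qq Hqq].
    destruct (constructive_indefinite_description _ (Hsurj t')) as [qq' Hqq'].
    simpl in E; subst; auto. }
  set (step := fun p rec => proj1_sig (constructive_indefinite_description _ (fresh p rec))).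
  set (h := Fix wf (fun _ => Q) step).
  assert (Heq : forall p, h p = step p (fun q _ => h q)).
  { intros p; unfold h; apply (Fix_eq wf (fun _ => Q) step). intros x f g Hfg.
    assert (f = g) by (apply functional_extensionality_dep; intros q;
      apply functional_extensionality_dep; intros; apply Hfg).
    subst; auto. }
  assert (Hnew : forall p q, ltP q p -> h q <> h p).
  { intros p q Hq; rewrite (Heq p); unfold step.
    destruct constructive_indefinite_description as [t Ht]; simpl.
    apply (Ht q Hq). }
  exists h; intros p q E.
  destruct (tot p q) as [X|[X|X]]; auto.
  - exfalso; apply (Hnew q p X E).
  - exfalso; apply (Hnew p q X); auto.
Qed.

Lemma wf_minimal {T} (R : T -> T -> Prop) (wf : well_founded R) (P : T -> Prop) y :
  P y -> exists c, P c /\ forall z, R z c -> ~ P z.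
Proof.
  intros Py; apply NNPP; intros Hn.
  assert (Hnone : forall y, ~ P y); [|exact (Hnone y Py)].
  intros y'; induction y' as [y' IH] using (well_founded_ind wf); intros Py'.
  apply Hn; exists y'; split; auto.
Qed.

(* Pairs are well-ordered by (max, first, second) lexicographically; the
   predecessors of a pair with maximum m all lie in [0,m] × [0,m], which by
   induction is smaller than T whenever m is. *)
Section Hessenberg.

Variables (T : Type) (lt : T -> T -> Prop).
Hypothesis wf : well_founded lt.
Hypothesis trans : forall x y z, lt x y -> lt y z -> lt x z.
Hypothesis total : forall x y, lt x y \/ x = y \/ lt y x.

Definition le_of (a b : T) : Prop := lt a b \/ a = b.

Lemma le_of_trans a b c : le_of a b -> le_of b c -> le_of a c.
Proof. intros [H1|H1] [H2|H2]; subst; unfold le_of; eauto. Qed.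

Definition tmax (a b : T) : T := if excluded_middle_informative (lt a b) then b else a.

Lemma le_tmax_l a b : le_of a (tmax a b).
Proof. unfold tmax; destruct excluded_middle_informative; unfold le_of; auto. Qed.

Lemma le_tmax_r a b : le_of b (tmax a b).
Proof.
  unfold tmax; destruct excluded_middle_informative; unfold le_of; auto.
  destruct (total a b) as [X|[X|X]]; [tauto| right; auto| left; auto].
Qed.

Definition pmax (p : T * T) : T := tmax (fst p) (snd p).

Definition pair_lt (p q : T * T) : Prop :=
  lt (pmax p) (pmax q) \/ (pmax p = pmax q /\
    (lt (fst p) (fst q) \/ (fst p = fst q /\ lt (snd p) (snd q)))).

Lemma pair_lt_wf : well_founded pair_lt.
Proof.
  assert (Hacc : forall m p, pmax p = m -> Acc pair_lt p).
  { intros m; induction m as [m IHm] using (well_founded_ind wf).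
    intros [a b]; revert b; induction a as [a IHa] using (well_founded_ind wf).
    intros b; induction b as [b IHb] using (well_founded_ind wf).
    intros Em; constructor; intros [c d] Hlt.
    destruct Hlt as [H1|[H1 [H2|[H2 H3]]]]; simpl in *.
    - apply (IHm (pmax (c, d))); [rewrite <- Em; exact H1| reflexivity].
    - apply IHa; auto. rewrite H1; auto.
    - subst c; apply IHb; auto. rewrite H1; auto. }
  intros p; apply (Hacc (pmax p)); auto.
Qed.

Lemma pair_lt_total p q : pair_lt p q \/ p = q \/ pair_lt q p.
Proof.
  unfold pair_lt.
  destruct (total (pmax p) (pmax q)) as [X|[X|X]]; [left; left; auto| |right; right; left; auto].
  destruct (total (fst p) (fst q)) as [Y|[Y|Y]]; [left; right; auto| |right; right; right; auto].
  destruct (total (snd p) (snd q)) as [Z|[Z|Z]]; [left; right; auto| |right; right; right; auto].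
  right; left; destruct p, q; simpl in *; subst; auto.
Qed.

Lemma pair_lt_pred_square p :
  card_le {q | pair_lt q p} ({z | le_of z (pmax p)} * {z | le_of z (pmax p)}).
Proof.
  assert (Hm : forall q, pair_lt q p -> le_of (pmax q) (pmax p)).
  { intros q [X|[X _]]; unfold le_of; auto. }
  exists (fun qq => (exist (fun z => le_of z (pmax p)) _
                     (le_of_trans _ _ _ (le_tmax_l _ _) (Hm _ (proj2_sig qq))),
                   exist (fun z => le_of z (pmax p)) _
                     (le_of_trans _ _ _ (le_tmax_r _ _) (Hm _ (proj2_sig qq))))).
  intros [[a b] Hq] [[c d] Hq'] E; simpl in E. inversion E; subst.
  apply sig_eq; reflexivity.
Qed.

Lemma closed_segment_option m : card_le {z | le_of z m} (option (seg lt m)).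
Proof.
  exists (fun z => match excluded_middle_informative (lt (proj1_sig z) m) with
     | left H => Some (exist _ (proj1_sig z) H) | right _ => None end).
  intros [z Hz] [w Hw]; simpl.
  destruct excluded_middle_informative; destruct excluded_middle_informative;
    intros E; try discriminate.
  - inversion E; apply sig_eq; auto.
  - apply sig_eq; simpl. destruct Hz; destruct Hw; subst; tauto.
Qed.

Lemma square_le_of_segments (Hinf : card_le nat T)
  (Hcard : forall x, ~ card_le T (seg lt x))
  (IH : forall x, card_le nat (seg lt x) -> card_le (seg lt x * seg lt x) (seg lt x)) :
  card_le (T * T) T.
Proof.
  apply (card_le_of_segments pair_lt pair_lt_wf pair_lt_total).
  intros p Hle.
  set (m := pmax p).
  assert (Hsq := card_le_trans _ _ _ Hle (pair_lt_pred_square p)).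
  assert (Hcl := closed_segment_option m).
  destruct (classic (card_le nat (seg lt m))) as [Hn|Hn].
  - apply (Hcard m). eapply card_le_trans; [exact Hsq|].
    eapply card_le_trans;
      [apply card_le_prod; (eapply card_le_trans; [exact Hcl| apply option_absorbed; exact Hn])|].
    apply IH; auto.
  - assert (Hfin : finite_type {z | le_of z m}).
    { apply not_infinite_finite; intros Hz; apply Hn.
      apply not_infinite_finite, finite_option in Hn.
      exfalso; apply (finite_not_infinite _ Hn), (card_le_trans _ _ _ Hz Hcl). }
    apply (finite_not_infinite _ (finite_prod _ _ Hfin Hfin)).
    eapply card_le_trans; eauto.
Qed.

End Hessenberg.

Section Segments.

Variables (T : Type) (lt : T -> T -> Prop).
Hypothesis wf : well_founded lt.
Hypothesis trans : forall x y z, lt x y -> lt y z -> lt x z.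
Hypothesis total : forall x y, lt x y \/ x = y \/ lt y x.

Lemma seg_wo (x : T) : is_wo (seg_lt lt x).
Proof.
  split; [|split].
  - apply (wf_inverse_image _ _ lt (fun a => proj1_sig a)); auto.
  - intros a b c; unfold seg_lt; eauto.
  - intros a b; unfold seg_lt.
    destruct (total (proj1_sig a) (proj1_sig b)) as [Y|[Y|Y]]; auto.
    right; left; apply sig_eq; auto.
Qed.

Lemma seg_mono a b : lt a b -> card_le (seg lt a) (seg lt b).
Proof.
  intros H; exists (fun y => exist _ (proj1_sig y) (trans _ _ _ (proj2_sig y) H)).
  intros x y E; apply sig_eq; inversion E; auto.
Qed.

Lemma seg_seg_le x (z : seg lt x) : card_le (seg (seg_lt lt x) z) (seg lt (proj1_sig z)).
Proof.
  exists (fun w => exist (fun y => lt y (proj1_sig z)) (proj1_sig (proj1_sig w)) (proj2_sig w)).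
  intros a b E; inversion E; apply sig_eq, sig_eq; auto.
Qed.

Lemma seg_le_seg_seg x (z : seg lt x) : card_le (seg lt (proj1_sig z)) (seg (seg_lt lt x) z).
Proof.
  exists (fun y => exist (fun w => seg_lt lt x w z)
    (exist (fun u => lt u x) (proj1_sig y) (trans _ _ _ (proj2_sig y) (proj2_sig z)))
    (proj2_sig y)).
  intros a b E; inversion E; apply sig_eq; auto.
Qed.

(* Every infinite initial segment absorbs its square, by induction: either it
   is equipotent to a shorter segment, or it is itself a cardinal. *)
Lemma segment_square x :
  card_le nat (seg lt x) -> card_le (seg lt x * seg lt x) (seg lt x).
Proof.
  induction x as [x IHx] using (well_founded_ind wf); intros Hn.
  destruct (wf_minimal lt wf (fun y => card_le (seg lt x) (seg lt y)) x (card_le_refl _))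
    as [c [Pc Mc]].
  destruct (total c x) as [X|[X|X]].
  - eapply card_le_trans; [apply card_le_prod; exact Pc|].
    eapply card_le_trans; [apply IHx; [auto| eapply card_le_trans; eauto]|].
    apply seg_mono; auto.
  - subst c.
    destruct (seg_wo x) as [swf [strans stotal]].
    apply (square_le_of_segments _ (seg_lt lt x) swf strans stotal Hn).
    + intros z Hz. apply (Mc (proj1_sig z) (proj2_sig z)).
      exact (card_le_trans _ _ _ Hz (seg_seg_le x z)).
    + intros z Hz.
      eapply card_le_trans; [apply card_le_prod; apply seg_seg_le|].
      eapply card_le_trans; [|apply seg_le_seg_seg].
      apply IHx; [exact (proj2_sig z)|].
      exact (card_le_trans _ _ _ Hz (seg_seg_le x z)).
  - exfalso; apply (Mc x X); apply card_le_refl.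
Qed.

End Segments.

Lemma card_square (T : Type) (lt : T -> T -> Prop) :
  is_card lt -> card_le nat T -> card_le (T * T) T.
Proof.
  intros [[wf [trans total]] Hc] Hn.
  apply (square_le_of_segments T lt wf trans total Hn).
  - intros x; exact (proj2 (Hc x)).
  - apply segment_square; auto.
Qed.

(* An infinite type absorbing its square also absorbs its finite lists,
   coded as nested pairs. *)
Lemma card_list (T : Type) : card_le (T * T) T -> card_le nat T -> card_le (list T) T.
Proof.
  intros [p Hp] Hn; destruct (option_absorbed T Hn) as [o Ho].
  set (enc := fix enc (l : list T) := match l with
     | nil => o None | a :: l => o (Some (p (a, enc l))) end).
  exists enc; intros l; induction l as [|a l IHl]; intros [|b l'] E; simpl in E; auto.
  - apply Ho in E; discriminate.
  - apply Ho in E; discriminate.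
  - apply Ho in E; injection E; intros E'; apply Hp in E'; injection E'; intros E1 E2.
    subst; f_equal; apply IHl; auto.
Qed.

Lemma filter_up {T} (F : set (set T)) : is_filter F ->
  forall A B, F A -> (forall x, A x -> B x) -> F B.
Proof. intros [_ [H _]] A B HA HB; apply (H A B HA HB). Qed.

Lemma filter_and {T} (F : set (set T)) : is_filter F ->
  forall A B, F A -> F B -> F (fun x => A x /\ B x).
Proof. intros [_ [_ H]]; auto. Qed.

Lemma filter_full {T} (F : set (set T)) : is_filter F -> forall A, (forall x, A x) -> F A.
Proof. intros HF A HA; apply (filter_up F HF (fun _ => True)); auto. apply HF. Qed.

Lemma filter_generators {T I} (F : set (set T)) (G : I -> set T) :
  is_filter F -> (forall a, F (G a)) ->
  forall l : list I, F (fun x => forall a, In a l -> G a x).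
Proof.
  intros HF HG; induction l as [|b l IHl].
  - apply (filter_full F HF); intros i a [].
  - apply (filter_up F HF _ _ (filter_and F HF _ _ (HG b) IHl)).
    intros i [H1 H2] a [E|E]; [subst; auto| auto].
Qed.

Lemma subD_mono {T} (F : set (set T)) X A B : is_filter F ->
  subD F X A -> (forall x, A x -> B x) -> subD F X B.
Proof.
  intros HF H HAB; unfold subD, ideal_of in *; apply (filter_up F HF _ _ H).
  intros x Hx [H1 H2]; apply Hx; split; auto.
Qed.

Lemma subD_trans {T} (F : set (set T)) X Y Z : is_filter F ->
  subD F X Y -> subD F Y Z -> subD F X Z.
Proof.
  intros HF H1 H2; unfold subD, ideal_of in *.
  apply (filter_up F HF _ _ (filter_and F HF _ _ H1 H2)).
  intros x [A1 A2] [B1 B2]; apply A2; split; auto.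
  apply NNPP; intros C; apply A1; split; auto.
Qed.

Lemma subD_and {T} (F : set (set T)) X A B : is_filter F ->
  subD F X A -> subD F X B -> subD F X (fun x => A x /\ B x).
Proof.
  intros HF H1 H2; unfold subD, ideal_of in *.
  apply (filter_up F HF _ _ (filter_and F HF _ _ H1 H2)).
  intros x [A1 A2] [B1 B2]; apply B2; split.
  - apply NNPP; intros C; apply A1; split; auto.
  - apply NNPP; intros C; apply A2; split; auto.
Qed.

Lemma positive_not_null {T} (F : set (set T)) X : is_filter F -> positive F X ->
  ~ subD F X (fun _ => False).
Proof.
  intros HF HP H; apply HP; unfold subD, ideal_of in *.
  apply (filter_up F HF _ _ H). intros x Hx HX; apply Hx; split; auto.
Qed.

Lemma positive_large {T} (F : set (set T)) X A : is_filter F -> contains_cosmall F ->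
  positive F X -> subD F X A -> ~ card_lt (elts A) T.
Proof.
  intros HF Hc HP H Hl; apply HP; unfold subD, ideal_of in *.
  apply (filter_up F HF _ _ (filter_and F HF _ _ H (Hc A Hl))).
  intros x [H1 H2] HX; apply H1; split; auto.
Qed.

Lemma full_set_unbounded (K : Type) (ltK : K -> K -> Prop) (X : set K) :
  is_card ltK -> card_le K (elts X) -> forall i, exists j, X j /\ (i = j \/ ltK i j).
Proof.
  intros [[_ [_ total]] Hcard] HX i; apply NNPP; intros Hn.
  assert (Hbelow : forall j, X j -> ltK j i).
  { intros j Xj; destruct (total j i) as [H|H]; auto.
    exfalso; apply Hn; exists j; split; auto; destruct H as [E|E]; auto. }
  apply (proj2 (Hcard i)), (card_le_trans _ _ _ HX).
  exists (fun jj : elts X => exist (fun y => ltK y i) _ (Hbelow _ (proj2_sig jj))).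
  intros u v E; apply sig_eq; inversion E; auto.
Qed.

Lemma empty_small (T : Type) (P : set T) : T -> (forall x, ~ P x) -> card_lt (elts P) T.
Proof.
  intros t HP; split; [apply card_le_sig|].
  intros [h _]; destruct (h t) as [x Hx]; exact (HP x Hx).
Qed.

Section SullamUltrafilter.

Variables (M : Type) (ltM : M -> M -> Prop) (K : Type) (lam_ : K -> M).
Variables (Ds : forall i, set (set (seg ltM (lam_ i)))) (W : K -> Type)
  (leW : forall i, W i -> W i -> Prop) (g : forall i, W i -> set (seg ltM (lam_ i))).
Variables (D : set (set K)) (L : Type) (ltL : L -> L -> Prop) (f : L -> forall i, W i).

Hypothesis HDs_filter : forall i, is_filter (Ds i).
Hypothesis HW : forall i, quasi_order (leW i).
Hypothesis Hg : forall i, good_map (leW i) (Ds i) (g i).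
Hypothesis HD_ultra : is_ultrafilter D.
Hypothesis Hf : sullam W leW D ltL f.
Hypothesis totL : forall a b, ltL a b \/ a = b \/ ltL b a.

Definition covers (i : K) (t : W i) (A : set M) : Prop :=
  subD (Ds i) (g i t) (fun y => A (proj1_sig y)).

Definition sullam_filter : set (set M) :=
  fun A => exists a : L, D (fun i => covers i (f a i) A).

Let HD_filter : is_filter D := proj1 HD_ultra.

Lemma covers_mono i t (A B : set M) : covers i t A -> (forall x, A x -> B x) -> covers i t B.
Proof. intros H HAB; apply (subD_mono _ _ _ _ (HDs_filter i) H); auto. Qed.

(* Since g_i is decreasing, coverings persist along leW i. *)
Lemma covers_later i s t (A B : set M) : leW i s t ->
  covers i s A -> covers i t B -> covers i t (fun x => A x /\ B x).
Proof.
  intros Hst HA HB; apply (subD_and _ _ _ _ (HDs_filter i)); auto.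
  exact (subD_trans _ _ _ _ (HDs_filter i) (proj1 (proj2 (Hg i)) _ _ Hst) HA).
Qed.

Lemma sullam_filter_up (A B : set M) :
  sullam_filter A -> (forall x, A x -> B x) -> sullam_filter B.
Proof.
  intros [a Ha] HAB; exists a; apply (filter_up D HD_filter _ _ Ha).
  intros i Hi; apply (covers_mono _ _ _ _ Hi HAB).
Qed.

(* Two witnesses are merged using the one later in the sullam. *)
Lemma sullam_filter_meet_ordered (A B : set M) a b : ltL a b \/ a = b ->
  D (fun i => covers i (f a i) A) -> D (fun i => covers i (f b i) B) ->
  sullam_filter (fun x => A x /\ B x).
Proof.
  intros Hab HA HB; exists b.
  assert (Hle : D (fun i => leW i (f a i) (f b i))).
  { destruct Hab as [Hab| ->]; [exact (proj1 Hf a b Hab)|].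
    apply (filter_full D HD_filter); intros i; apply (HW i). }
  apply (filter_up D HD_filter _ _ (filter_and D HD_filter _ _ Hle
                                      (filter_and D HD_filter _ _ HA HB))).
  intros i [Hi [H1 H2]]; exact (covers_later _ _ _ _ _ Hi H1 H2).
Qed.

Lemma sullam_filter_meet (A B : set M) :
  sullam_filter A -> sullam_filter B -> sullam_filter (fun x => A x /\ B x).
Proof.
  intros [a HA] [b HB]; destruct (totL a b) as [Hab|[Hab|Hab]].
  - exact (sullam_filter_meet_ordered _ _ _ _ (or_introl Hab) HA HB).
  - exact (sullam_filter_meet_ordered _ _ _ _ (or_intror Hab) HA HB).
  - apply (sullam_filter_up (fun x => B x /\ A x)); [|intros x [? ?]; split; auto].
    exact (sullam_filter_meet_ordered _ _ _ _ (or_introl Hab) HB HA).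
Qed.

(* The sets g_i(t) are D_i-positive, so the empty set is never covered. *)
Lemma sullam_filter_proper : ~ sullam_filter (fun _ => False).
Proof.
  intros [a Ha]; apply (proj1 (proj2 HD_ultra)), (filter_up D HD_filter _ _ Ha).
  intros i Hi; exact (positive_not_null _ _ (HDs_filter i) (proj1 (Hg i) _) Hi).
Qed.

(* Decidability of g_i makes the deciding conditions dense in each W_i; the
   sullam meets them D-almost everywhere, and D being an ultrafilter picks
   one side. *)
Lemma sullam_filter_decides (A : set M) : sullam_filter A \/ sullam_filter (compl A).
Proof.
  set (V := fun i (t : W i) => covers i t A \/ covers i t (compl A)).
  assert (HV : forall i, dense (leW i) (V i)).
  { intros i s. destruct (proj2 (proj2 (Hg i)) s (fun y => A (proj1_sig y)))
      as [t [Hst Ht]].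
    exists t; split; auto. }
  destruct (proj2 Hf V HV) as [a Ha].
  destruct (proj2 (proj2 HD_ultra) (fun i => covers i (f a i) A)) as [H|H].
  - left; exists a; exact H.
  - right; exists a. apply (filter_up D HD_filter _ _ (filter_and D HD_filter _ _ Ha H)).
    intros i [[H1|H1] H2]; [contradiction|exact H1].
Qed.

(* Any witness a < lambda witnesses the full set. *)
Lemma sullam_filter_full : sullam_filter (fun _ => True).
Proof.
  destruct (sullam_filter_decides (fun _ => True)) as [H|[a _]]; [exact H|].
  exists a; apply (filter_full D HD_filter); intros i.
  apply (filter_full _ (HDs_filter i)); intros y [_ Hy]; apply Hy; auto.
Qed.

Lemma sullam_filter_ultra : is_ultrafilter sullam_filter.
Proof.
  split; [split; [|split]| split].
  - exact sullam_filter_full.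
  - exact sullam_filter_up.
  - exact sullam_filter_meet.
  - exact sullam_filter_proper.
  - exact sullam_filter_decides.
Qed.

(* Uniformity: D-almost every i has lambda_i-many points of A, and such i
   occur beyond any given i, where mu_i already exceeds any x < mu. *)
Variables (ltK : K -> K -> Prop) (mu_ : K -> M).
Hypothesis HM : is_card ltM.
Hypothesis HK : is_card ltK.
Hypothesis HD_unif : uniform D.
Hypothesis HDs_cosmall : forall i, contains_cosmall (Ds i).
Hypothesis Hlam_reg : forall i, regular (seg_lt ltM (lam_ i)).
Hypothesis Hmu_union : forall x : M, exists i, ltM x (mu_ i).
Hypothesis Hmu_incr : forall i j, ltK i j -> ltM (mu_ i) (mu_ j).
Hypothesis Hmu_lam : forall i, ltM (mu_ i) (lam_ i) \/ mu_ i = lam_ i.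

Let transM : forall x y z, ltM x y -> ltM y z -> ltM x z := proj1 (proj2 (proj1 HM)).

Lemma covers_large j t (A : set M) : covers j t A -> card_le (seg ltM (lam_ j)) (elts A).
Proof.
  intros Hcov.
  assert (Hbig := positive_large _ _ _ (HDs_filter j) (HDs_cosmall j) (proj1 (Hg j) t) Hcov).
  assert (Htrace : card_le (seg ltM (lam_ j)) (elts (fun y : seg ltM (lam_ j) => A (proj1_sig y)))).
  { apply NNPP; intros Hn; apply Hbig; split; [apply card_le_sig| exact Hn]. }
  apply (card_le_trans _ _ _ Htrace).
  exists (fun u => exist A (proj1_sig (proj1_sig u)) (proj2_sig u)).
  intros u v E; inversion E; apply sig_eq, sig_eq; auto.
Qed.

Lemma lam_segment_small j x : ltM x (lam_ j) -> ~ card_le (seg ltM (lam_ j)) (seg ltM x).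
Proof.
  intros Hx Hle; set (z := exist (fun y => ltM y (lam_ j)) x Hx).
  apply (proj2 (proj2 (proj1 (Hlam_reg j)) z)).
  exact (card_le_trans _ _ _ Hle (seg_le_seg_seg _ _ transM _ z)).
Qed.

Lemma sullam_filter_uniform : uniform sullam_filter.
Proof.
  intros A [a Ha]; pose proof HM as [[wfM [_ totM]] _].
  apply (card_le_of_segments ltM wfM totM); intros x Hx.
  destruct (Hmu_union x) as [i Hi].
  destruct (full_set_unbounded K ltK _ HK (HD_unif _ Ha) i) as [j [Hj Hij]].
  assert (Hxmu : ltM x (mu_ j)) by (destruct Hij as [<-|Hij]; eauto).
  assert (Hxlam : ltM x (lam_ j)) by (destruct (Hmu_lam j) as [H| <-]; eauto).
  exact (lam_segment_small j x Hxlam (card_le_trans _ _ _ (covers_large _ _ _ Hj) Hx)).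
Qed.

Variables (G : L -> set K) (F : L -> forall i, set (seg ltM (lam_ i))).
Hypothesis HG : generated_by D G.
Hypothesis HF : prod_cofinal (fun i => seg ltM (lam_ i)) Ds D F.

Definition base (a b : L) (l : list L) : set M := fun x =>
  exists i, (forall c, In c l -> G c i) /\
    exists y : seg ltM (lam_ i), proj1_sig y = x /\ g i (f a i) y /\ F b i y.

Lemma base_in a b l : sullam_filter (base a b l).
Proof.
  exists a; apply (filter_up D HD_filter _ _ (filter_generators D G HD_filter (proj1 HG) l)).
  intros i Hi; unfold covers, subD, ideal_of.
  apply (filter_up _ (HDs_filter i) _ _ (proj1 HF b i)).
  intros y Hy [H1 H2]; apply H2; exists i; split; auto; exists y; auto.
Qed.

(* Given a witness a for B, shrink each D_i-measure-one set g_i(f_a(i)) ⊆_D B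
   to a genuine inclusion by intersecting with a cofinal F_b, and pick
   generators l of a set in D on which both hold. *)
Lemma base_below (B : set M) :
  sullam_filter B -> exists a b l, forall x, base a b l x -> B x.
Proof.
  intros [a Ha].
  set (C := fun i (y : seg ltM (lam_ i)) =>
              covers i (f a i) B -> ~ (g i (f a i) y /\ ~ B (proj1_sig y))).
  assert (HC : forall i, Ds i (C i)).
  { intros i; destruct (classic (covers i (f a i) B)) as [Hcov|Hcov].
    - apply (filter_up _ (HDs_filter i) _ _ Hcov); intros y Hy _; exact Hy.
    - apply (filter_full _ (HDs_filter i)); intros y Hy; contradiction. }
  destruct (proj2 HF C HC) as [b Hb].
  destruct (proj2 HG _ (filter_and D HD_filter _ _ Ha Hb)) as [l Hl].
  exists a, b, l; intros x [i [Hil [y [<- [Hgy HFy]]]]].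
  destruct (Hl i Hil) as [Hcov Hsub].
  apply NNPP; intros HnB; exact (Hsub y HFy Hcov (conj Hgy HnB)).
Qed.

Lemma sullam_filter_character (m0 : M) (enc : L * L * list L -> L) :
  (forall s t, enc s = enc t -> s = t) -> Ch_le sullam_filter L.
Proof.
  intros Henc.
  set (A := fun c x => (exists a b l, enc (a, b, l) = c /\ base a b l x) \/
                        ~ (exists t, enc t = c)).
  exists A; split.
  - intros c; destruct (classic (exists t, enc t = c)) as [[[[a b] l] Ht]|Hn].
    + apply (sullam_filter_up _ _ (base_in a b l)).
      intros x Hx; left; exists a, b, l; auto.
    + apply (sullam_filter_up _ _ sullam_filter_full); intros x _; right; auto.
  - intros B HB; destruct (base_below B HB) as [a [b [l Hbl]]].
    exists (enc (a, b, l)); apply empty_small; [exact m0|].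
    intros x [[[a' [b' [l' [E Hx]]]]|Hn] HnB].
    + apply Henc in E; injection E; intros -> -> ->; exact (HnB (Hbl x Hx)).
    + apply Hn; eexists; reflexivity.
Qed.

End SullamUltrafilter.

Lemma card_triples (T : Type) (lt : T -> T -> Prop) :
  is_card lt -> card_le nat T -> card_le (T * T * list T) T.
Proof.
  intros Hc Hn; assert (Hsq := card_square T lt Hc Hn).
  eapply card_le_trans; [apply card_le_prod; [exact Hsq| exact (card_list T Hsq Hn)]|].
  exact Hsq.
Qed.

Theorem theorem2p4
  (* mu, kappa = cf(mu), lambda: cardinals as initial well-orders *)
  (M : Type) (ltM : M -> M -> Prop)
  (K : Type) (ltK : K -> K -> Prop)
  (L : Type) (ltL : L -> L -> Prop)
  (* mu is a singular cardinal with cf(mu) = kappa < mu *)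
  (HM : is_card ltM) (HMinf : card_le nat M)
  (HK : is_card ltK) (HcfM : cf_is ltM K) (HKM : card_lt K M)
  (* lambda regular, mu < lambda <= 2^mu *)
  (HL : regular ltL) (HML : card_lt M L) (HL2 : card_le L (M -> Prop))
  (* nice system *)
  (mu_ lam_ : K -> M)
  (Hmu_card : forall i, is_card (seg_lt ltM (mu_ i)))
  (Hmu_incr : forall i j, ltK i j -> ltM (mu_ i) (mu_ j))
  (Hmu_union : forall x : M, exists i, ltM x (mu_ i))
  (Hlam_reg : forall i, regular (seg_lt ltM (lam_ i)))
  (Hlam_incr : forall i j, ltK i j -> ltM (lam_ i) (lam_ j))
  (Hmu_lam : forall i, ltM (mu_ i) (lam_ i) \/ mu_ i = lam_ i)
  (Hlam_mu : forall i j, is_succ ltK i j -> ltM (lam_ i) (mu_ j))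
  (Ds : forall i, set (set (seg ltM (lam_ i))))
  (HDs_filter : forall i, is_filter (Ds i))
  (HDs_unif : forall i, uniform (Ds i))
  (HDs_cosmall : forall i, contains_cosmall (Ds i))
  (W : K -> Type) (leW : forall i, W i -> W i -> Prop)
  (HW : forall i, quasi_order (leW i))
  (g : forall i, W i -> set (seg ltM (lam_ i)))
  (Hg : forall i, good_map (leW i) (Ds i) (g i))
  (* (1) D uniform ultrafilter over kappa generated by at most lambda sets *)
  (D : set (set K))
  (HD_ultra : is_ultrafilter D) (HD_unif : uniform D)
  (HD_gen : exists G : L -> set K, generated_by D G)
  (* (2) a sullam of length lambda *)
  (f : L -> forall i, W i)
  (Hf : sullam W leW D ltL f)
  (* (3) cf(prod D_i, superset) = lambda *)
  (Hcf : prod_cf_is (fun i => seg ltM (lam_ i)) Ds D L) :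
  exists U : set (set M), is_ultrafilter U /\ uniform U /\ Ch_le U L.
Proof.
  destruct HL as [HLcard [HLinf _]].
  pose proof (proj2 (proj2 (proj1 HLcard))) as totL.
  destruct HD_gen as [G HG].
  destruct Hcf as [[F HF] _].
  destruct (card_triples L ltL HLcard HLinf) as [enc Henc].
  destruct HMinf as [eM _].
  exists (sullam_filter M ltM K lam_ Ds W g D L f); split; [|split].
  - exact (sullam_filter_ultra _ _ _ _ _ _ _ _ _ _ _ _ HDs_filter HW Hg HD_ultra Hf totL).
  - exact (sullam_filter_uniform _ _ _ _ _ _ _ _ _ _ _ HDs_filter Hg ltK mu_ HM HK
             HD_unif HDs_cosmall Hlam_reg Hmu_union Hmu_incr Hmu_lam).
  - exact (sullam_filter_character _ _ _ _ _ _ _ _ _ _ _ _ HDs_filter Hg HD_ultra Hf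
             G F HG HF (eM 0) enc Henc).
Qed.
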